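(* Let $(A,* )$ be an involutive associative algebra, $(M,* )$ an involutive $A$-bimodule, and $T:M\to A$ a relative Rota-Baxter operator on $A$ with respect to $M$. Then $H^\bullet_T(M,A)\cong iH^\bullet_T(M,A)\oplus i_-H^\bullet_T(M,A)$, where these are the cohomologies of the complexes $(\mathrm{Hom}(M^{\otimes\bullet},A),d_T)$, $(i\mathrm{Hom}(M^{\otimes\bullet},A),d_T)$ and $(i_-\mathrm{Hom}(M^{\otimes\bullet},A),d_T)$ respectively.
   Context: An involutive associative algebra is an associative algebra $A$ with a linear map $*:A\to A$ satisfying $a^{**}=a$ and $(ab)^*=b^*a^*$; an involutive $A$-bimodule is an $A$-bimodule $M$ with $*:M\to M$, $u^{**}=u$, $(au)^*=u^*a^*$, $(ua)^*=a^*u^*$. A relative Rota-Baxter operator is a linear $T:M\to A$ with $T(u^* )=T(u)^*$ and $T(u)T(v)=T(uT(v)+T(u)v)$. Put $u\circledast v=uT(v)+T(u)v$, $l_T(u,a)=T(u)a-T(ua)$, $r_T(a,u)=aT(u)-T(au)$. Let $\mathrm{Hom}(M^{\otimes 0},A)=A$. The differential $d_T:\mathrm{Hom}(M^{\otimes n},A)\to \mathrm{Hom}(M^{\otimes n+1},A)$ is $d_T(a)(u)=l_T(u,a)-r_T(a,u)$ for $a\in A$, and for $n\ge1$, $(d_Tf)(u_1,\ldots,u_{n+1})=(-1)^n\big[l_T(u_1,f(u_2,\ldots,u_{n+1}))+\sum_{i=1}^n(-1)^if(u_1,\ldots,u_i\circledast u_{i+1},\ldots,u_{n+1})+(-1)^{n+1}r_T(f(u_1,\ldots,u_n),u_{n+1})\big]$;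 $H^\bullet_T(M,A)$ is its cohomology. Define $S_0(a)=-a^*$ and $(S_nf)(u_1,\ldots,u_n)=(-1)^{\frac{(n-1)(n-2)}{2}}f(u_n^*,\ldots,u_1^* )^*$ for $n\ge1$; then $S_n^2=\mathrm{id}$. Let $i\mathrm{Hom}(M^{\otimes n},A)$ and $i_-\mathrm{Hom}(M^{\otimes n},A)$ be the $+1$ and $-1$ eigenspaces of $S_n$ (so $i\mathrm{Hom}(M^{\otimes 0},A)=\{a\mid a^*=-a\}$). Both are subcomplexes for $d_T$; their cohomologies are $iH^\bullet_T(M,A)$ and $i_-H^\bullet_T(M,A)$. *)

From mathcomp Require Import all_boot all_algebra.
Set Implicit Arguments. Unset Strict Implicit. Unset Printing Implicit Defensive.
Import GRing.Theory.
Local Open Scope ring_scope.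

Section InvolutiveRB.
Variable K : fieldType.
Variables A M : lmodType K.

Definition linear_map (U V : lmodType K) (f : U -> V) :=
  forall (a : K) x y, f (a *: x + y) = a *: f x + f y.

Definition bilinear_op (U V W : lmodType K) (op : U -> V -> W) :=
  (forall (a : K) x y z, op (a *: x + y) z = a *: op x z + op y z) /\
  (forall (a : K) x y z, op z (a *: x + y) = a *: op z x + op z y).

Definition involutive_assoc_algebra (mul : A -> A -> A) (st : A -> A) :=
  bilinear_op mul /\
  (forall a b c, mul (mul a b) c = mul a (mul b c)) /\
  linear_map st /\
  (forall a, st (st a) = a) /\
  (forall a b, st (mul a b) = mul (st b) (st a)).

Definition involutive_bimodule (mul : A -> A -> A) (st : A -> A)
    (lact : A -> M -> M) (ract : M -> A -> M) (stM : M -> M) :=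
  bilinear_op lact /\ bilinear_op ract /\
  (forall a b u, lact (mul a b) u = lact a (lact b u)) /\
  (forall u a b, ract u (mul a b) = ract (ract u a) b) /\
  (forall a u b, ract (lact a u) b = lact a (ract u b)) /\
  linear_map stM /\
  (forall u, stM (stM u) = u) /\
  (forall a u, stM (lact a u) = ract (stM u) (st a)) /\
  (forall u a, stM (ract u a) = lact (st a) (stM u)).

Definition rel_RB_operator (mul : A -> A -> A) (st : A -> A)
    (lact : A -> M -> M) (ract : M -> A -> M) (stM : M -> M) (T : M -> A) :=
  linear_map T /\
  (forall u, T (stM u) = st (T u)) /\
  (forall u v, mul (T u) (T v) = T (ract u (T v) + lact (T u) v)).

(** n-cochains: maps M^n -> A (arguments indexed by 'I_n); the genuine
    elements of Hom(M^{(x)n}, A) are the multilinear ones.  For n = 0,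
    ('I_0 -> M) -> A is (up to funext) just A. *)
Definition cochain n := ('I_n -> M) -> A.

Definition upd n (u : 'I_n -> M) (i : 'I_n) (x : M) : 'I_n -> M :=
  fun j => if j == i then x else u j.

Definition multilinear n (f : cochain n) :=
  forall (u : 'I_n -> M) (i : 'I_n) (a : K) (x y : M),
    f (upd u i (a *: x + y)) = a *: f (upd u i x) + f (upd u i y).

Section Differential.
Variables (mul : A -> A -> A) (lact : A -> M -> M) (ract : M -> A -> M)
  (T : M -> A).

Definition lT (u : M) (a : A) : A := mul (T u) a - T (ract u a).
Definition rT (a : A) (u : M) : A := mul a (T u) - T (lact a u).
Definition circ (u v : M) : M := ract u (T v) + lact (T u) v.

(** (u_1, ..., u_{k} * u_{k+1}, ..., u_{n+1}) with 0-based merge position k. *)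
Definition merge n (k : 'I_n) (u : 'I_n.+1 -> M) : 'I_n -> M :=
  fun i => if (i < k)%N then u (widen_ord (leqnSn n) i)
           else if i == k then circ (u (widen_ord (leqnSn n) i)) (u (lift ord0 i))
           else u (lift ord0 i).

(** d_T : Hom(M^n, A) -> Hom(M^{n+1}, A).  For n = 0 this reduces to
    d_T(a)(u) = l_T(u,a) - r_T(a,u). *)
Definition dT n (f : cochain n) : cochain n.+1 := fun u =>
  (-1) ^+ n *:
    ( lT (u ord0) (f (fun i => u (lift ord0 i)))
    + \sum_(k < n) (-1) ^+ k.+1 *: f (merge k u)
    + (-1) ^+ n.+1 *: rT (f (fun i => u (widen_ord (leqnSn n) i))) (u ord_max) ).
End Differential.

Section Involution.
Variables (st : A -> A) (stM : M -> M).

(** S_0(a) = -star(a);  S_n f (u_1..u_n) = (-1)^{(n-1)(n-2)/2} star(f(star u_n,..,star u_1)). *)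
Definition sgnS n : K :=
  match n with 0 => - 1 | _ => (-1) ^+ ((n.-1 * n.-2) %/ 2) end.

Definition Sop n (f : cochain n) : cochain n := fun u =>
  sgnS n *: st (f (fun i => stM (u (rev_ord i)))).
End Involution.

Definition HomP n (f : cochain n) := multilinear f.
Definition iHomP st stM n (f : cochain n) :=
  multilinear f /\ Sop st stM f = f.
Definition imHomP st stM n (f : cochain n) :=
  multilinear f /\ Sop st stM f = (fun u => - f u).

Section Cohomology.
Variables (mul : A -> A -> A) (lact : A -> M -> M) (ract : M -> A -> M)
  (T : M -> A).
Variable P : forall n, cochain n -> Prop.

Definition cocycle n (f : cochain n) :=
  P f /\ dT mul lact ract T f = (fun _ => 0).

Definition coboundary n : cochain n -> Prop :=
  match n return cochain n -> Prop with
  | 0 => fun f => f = (fun _ => 0)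
  | m.+1 => fun f => exists g : cochain m, P g /\ dT mul lact ract T g = f
  end.
End Cohomology.

(** H^n_P  ~=  H^n_Q (+) H^n_R  as K-vector spaces, where H^n_X = Z^n_X / B^n_X. *)
Definition cohomology_iso_sum mul lact ract T
    (P Q R : forall n, cochain n -> Prop) n :=
  let Z X := @cocycle mul lact ract T X n in
  let B X := @coboundary mul lact ract T X n in
  exists Phi : cochain n -> cochain n * cochain n,
    (forall (a : K) f g, Z P f -> Z P g ->
       Phi (fun u => a *: f u + g u) =
       ((fun u => a *: (Phi f).1 u + (Phi g).1 u),
        (fun u => a *: (Phi f).2 u + (Phi g).2 u))) /\
    (forall f, Z P f -> Z Q (Phi f).1 /\ Z R (Phi f).2) /\
    (forall f, Z P f -> (B P f <-> B Q (Phi f).1 /\ B R (Phi f).2)) /\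
    (forall g h, Z Q g -> Z R h ->
       exists f, Z P f /\ B Q (fun u => (Phi f).1 u - g u)
                       /\ B R (fun u => (Phi f).2 u - h u)).

End InvolutiveRB.

From Pilot Require Import Defs.
From mathcomp Require Import all_boot all_algebra zify.
From Stdlib Require Import FunctionalExtensionality.
Set Implicit Arguments. Unset Strict Implicit. Unset Printing Implicit Defensive.
Import GRing.Theory.
Local Open Scope ring_scope.

(** The operators S_n form an involution of the cochain complex which preserves
    multilinearity and commutes with the differential, S_{n+1} (d_T f) = d_T (S_n f):
    conjugating by the involutions reverses the arguments, which exchanges the
    l_T and r_T terms of d_T and reindexes the merged terms by k |-> n-1-k, and
    the signs (-1)^((n-1)(n-2)/2) are exactly those that absorb the resulting
    signs.  As 2 is invertible, every cochain splits as
    f = (f + S f)/2 + (f - S f)/2 into eigencochains, and both projections are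
    chain maps; hence cocycles and coboundaries split, and so does cohomology. *)

Section LinearMap.
Variables (K : fieldType) (U V : lmodType K) (f : U -> V).
Hypothesis f_lin : linear_map f.

Lemma linear_map0 : f 0 = 0.
Proof.
have := f_lin 1 0 0; rewrite !scale1r addr0 => f0_double.
by apply: (addrI (f 0)); rewrite -f0_double addr0.
Qed.

Lemma linear_mapD x y : f (x + y) = f x + f y.
Proof. by rewrite -[x in LHS]scale1r f_lin scale1r. Qed.

Lemma linear_mapZ a x : f (a *: x) = a *: f x.
Proof. by rewrite -[a *: x]addr0 f_lin linear_map0 addr0. Qed.

Lemma linear_mapB x y : f (x - y) = f x - f y.
Proof. by rewrite -scaleN1r addrC f_lin scaleN1r addrC. Qed.

Lemma linear_map_sum n (F : 'I_n -> U) : f (\sum_(i < n) F i) = \sum_(i < n) f (F i).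
Proof. exact: (big_morph f linear_mapD linear_map0). Qed.
End LinearMap.

Lemma bilinear_op_linl (K : fieldType) (U V W : lmodType K) (op : U -> V -> W) :
  bilinear_op op -> forall z, linear_map (op^~ z).
Proof. by move=> [op_linl _] z a x y; apply: op_linl. Qed.

Lemma bilinear_op_linr (K : fieldType) (U V W : lmodType K) (op : U -> V -> W) :
  bilinear_op op -> forall z, linear_map (op z).
Proof. by move=> [_ op_linr] z a x y; apply: op_linr. Qed.

Lemma scaler_comm (K : fieldType) (V : lmodType K) (a b : K) (v : V) :
  a *: (b *: v) = b *: (a *: v).
Proof. by rewrite !scalerA mulrC. Qed.

Lemma half_add_self (K : fieldType) (V : lmodType K) (v : V) :
  (2%:R : K) != 0 -> 2%:R^-1 *: (v + v) = v.
Proof. by move=> two_neq0; rewrite -mulr2n -scaler_nat scalerA mulVf // scale1r. Qed.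

Lemma scale_add3_split (K : fieldType) (V : lmodType K) (a e : K) (x1 x2 x3 y1 y2 y3 : V) :
  (a *: x1 + y1) + (a *: x2 + y2) + e *: (a *: x3 + y3) =
  a *: (x1 + x2 + e *: x3) + (y1 + y2 + e *: y3).
Proof.
rewrite !scalerDr [e *: (a *: _)]scalerA mulrC -scalerA.
by rewrite [RHS]addrACA [in RHS](addrACA (a *: x1)).
Qed.

Lemma sign_flip_sum (K : fieldType) (V : lmodType K) n (e : K) (c c' : 'I_n -> K)
    (L R : V) (S : 'I_n -> V) (e_sqr : e * e = 1) (c_sign : forall k, c k = e * c' k) :
  L + \sum_(k < n) c k *: S k + e *: R = e *: (R + \sum_(k < n) c' k *: S k + e *: L).
Proof.
under eq_bigr => k _ do rewrite c_sign -scalerA.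
by rewrite -scaler_sumr !scalerDr scalerA e_sqr scale1r addrC [L + _]addrC addrA.
Qed.

Lemma rev_ord0 n : rev_ord (ord0 : 'I_n.+1) = ord_max.
Proof. by apply: val_inj; rewrite /= subn1. Qed.

Lemma rev_ord_max n : rev_ord (ord_max : 'I_n.+1) = ord0.
Proof. by apply: val_inj; rewrite /= subnn. Qed.

Lemma rev_ord_lift0 n (i : 'I_n) :
  rev_ord (lift ord0 i) = widen_ord (leqnSn n) (rev_ord i).
Proof. by apply: val_inj; rewrite /= /bump leq0n. Qed.

Lemma rev_ord_widen n (i : 'I_n) :
  rev_ord (widen_ord (leqnSn n) i) = lift ord0 (rev_ord i).
Proof. by apply: val_inj; rewrite /= /bump leq0n /=; have := ltn_ord i; lia. Qed.

Lemma sign_sqr (K : fieldType) n : (-1) ^+ n * (-1) ^+ n = 1 :> K.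
Proof. by rewrite -expr2 sqrr_sign. Qed.

Lemma sgnS_sqr (K : fieldType) n : sgnS K n * sgnS K n = 1.
Proof. by case: n => [|n] /=; rewrite ?mulrNN ?mulr1 ?sign_sqr. Qed.

(* At n = 0 this is where the extra sign of S_0(a) = -a^* is needed. *)
Lemma sgnS_recr (K : fieldType) n : sgnS K n.+1 = (-1) ^+ n.+1 * sgnS K n.
Proof.
case: n => [|m] /=; first by rewrite mul0n div0n expr0 expr1 mulrNN mulr1.
have -> : (m.+1 * m = m * m.-1 + m * 2)%N by case: m => //= m; lia.
rewrite divnDr ?dvdn_mull // mulnK // exprD mulrC.
by rewrite -[m.+2]addn2 exprD expr2 mulrNN !mulr1.
Qed.

Lemma sign_rev_ord (K : fieldType) n (k : 'I_n) :
  (-1) ^+ k.+1 = (-1) ^+ n.+1 * (-1) ^+ (rev_ord k).+1 :> K.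
Proof.
have lt_kn := ltn_ord k.
rewrite -exprD /= (_ : (n.+1 + (n - k.+1).+1 = k.+1 + (n - k) * 2)%N); last by lia.
by rewrite exprD exprM sqrr_sign mulr1.
Qed.

Section CochainLinear.
Variables (K : fieldType) (A M : lmodType K).

Lemma multilinear0 n : multilinear (fun _ : 'I_n -> M => 0 : A).
Proof. by move=> u i a x y; rewrite scaler0 addr0. Qed.

Lemma multilinearD n (f g : cochain A M n) :
  multilinear f -> multilinear g -> multilinear (fun u => f u + g u).
Proof.
by move=> f_ml g_ml u i a x y; rewrite f_ml g_ml scalerDr addrACA.
Qed.

Lemma multilinearZ n (f : cochain A M n) b :
  multilinear f -> multilinear (fun u => b *: f u).
Proof. by move=> f_ml u i a x y; rewrite f_ml scalerDr scaler_comm. Qed.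

Lemma multilinearB n (f g : cochain A M n) :
  multilinear f -> multilinear g -> multilinear (fun u => f u - g u).
Proof.
by move=> f_ml g_ml u i a x y; rewrite f_ml g_ml scalerBr opprD addrACA.
Qed.

Definition cochain_linear n m (Phi : cochain A M n -> cochain A M m) :=
  forall a f g, Phi (fun u => a *: f u + g u) = (fun u => a *: Phi f u + Phi g u).

Variables (n m : nat) (Phi : cochain A M n -> cochain A M m).
Hypothesis Phi_lin : cochain_linear Phi.

Lemma cochain_linear0 : Phi (fun _ => 0) = (fun _ => 0).
Proof.
have := Phi_lin 1 (fun _ => 0) (fun _ => 0).
have -> : (fun _ : 'I_n -> M => 1 *: (0 : A) + 0) = (fun _ => 0).
  by apply: functional_extensionality => u; rewrite scaler0 addr0.
move=> Phi0_double; apply: functional_extensionality => u.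
have := congr1 (fun F => F u) Phi0_double; rewrite /= scale1r => Phi0u_double.
by apply: (addIr (Phi (fun _ => 0) u)); rewrite add0r -Phi0u_double.
Qed.

Lemma cochain_linearD f g : Phi (fun u => f u + g u) = (fun u => Phi f u + Phi g u).
Proof.
have := Phi_lin 1 f g; rewrite (_ : (fun u => 1 *: f u + g u) = (fun u => f u + g u)).
  by move=> ->; apply: functional_extensionality => u; rewrite scale1r.
by apply: functional_extensionality => u; rewrite scale1r.
Qed.

Lemma cochain_linearZ a f : Phi (fun u => a *: f u) = (fun u => a *: Phi f u).
Proof.
have := Phi_lin a f (fun _ => 0); rewrite cochain_linear0.
rewrite (_ : (fun u => a *: f u + 0) = (fun u => a *: f u)).
  by move=> ->; apply: functional_extensionality => u; rewrite addr0.
by apply: functional_extensionality => u; rewrite addr0.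
Qed.

Lemma cochain_linearB f g : Phi (fun u => f u - g u) = (fun u => Phi f u - Phi g u).
Proof.
rewrite (cochain_linearD f (fun u => - g u)).
have -> : (fun u => - g u) = (fun u => -1 *: g u).
  by apply: functional_extensionality => u; rewrite scaleN1r.
rewrite cochain_linearZ.
by apply: functional_extensionality => u; rewrite scaleN1r.
Qed.
End CochainLinear.

Section StarDifferential.
Variables (K : fieldType) (A M : lmodType K).
Variables (mul : A -> A -> A) (st : A -> A) (lact : A -> M -> M)
  (ract : M -> A -> M) (stM : M -> M) (T : M -> A).
Hypotheses (mul_bilin : bilinear_op mul) (lact_bilin : bilinear_op lact)
  (ract_bilin : bilinear_op ract) (T_lin : linear_map T).
Hypotheses (st_lin : linear_map st) (stK : involutive st)
  (st_mul : forall a b, st (mul a b) = mul (st b) (st a)).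
Hypotheses (stM_lin : linear_map stM) (stMK : involutive stM)
  (stM_lact : forall a u, stM (lact a u) = ract (stM u) (st a))
  (stM_ract : forall u a, stM (ract u a) = lact (st a) (stM u))
  (T_stM : forall u, T (stM u) = st (T u)).

Local Notation lT := (Defs.lT mul ract T).
Local Notation rT := (Defs.rT mul lact T).
Local Notation circ := (Defs.circ lact ract T).
Local Notation merge := (Defs.merge lact ract T).
Local Notation dT := (Defs.dT mul lact ract T).
Local Notation Sop := (Defs.Sop st stM).

Lemma lT_lin u : linear_map (lT u).
Proof.
move=> a x y; rewrite /Defs.lT (bilinear_op_linr mul_bilin) (bilinear_op_linr ract_bilin).
by rewrite T_lin scalerBr opprD addrACA.
Qed.

Lemma rT_lin u : linear_map (rT^~ u).
Proof.
move=> a x y; rewrite /Defs.rT (bilinear_op_linl mul_bilin) (bilinear_op_linl lact_bilin).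
by rewrite T_lin scalerBr opprD addrACA.
Qed.

Lemma st_lT u a : st (lT u a) = rT (st a) (stM u).
Proof. by rewrite /Defs.lT /Defs.rT (linear_mapB st_lin) st_mul -!T_stM stM_ract. Qed.

Lemma st_rT a u : st (rT a u) = lT (stM u) (st a).
Proof. by rewrite /Defs.lT /Defs.rT (linear_mapB st_lin) st_mul -!T_stM stM_lact. Qed.

Lemma stM_circ u v : stM (circ u v) = circ (stM v) (stM u).
Proof. by rewrite /Defs.circ (linear_mapD stM_lin) stM_lact stM_ract -!T_stM addrC. Qed.

Definition star_rev n (u : 'I_n -> M) : 'I_n -> M := fun i => stM (u (rev_ord i)).

Lemma SopE n (f : cochain A M n) u : Sop f u = sgnS K n *: st (f (star_rev u)).
Proof. by []. Qed.

Lemma st_star_rev n (f : cochain A M n) u : st (f (star_rev u)) = sgnS K n *: Sop f u.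
Proof. by rewrite SopE scalerA sgnS_sqr scale1r. Qed.

Lemma star_rev_lift0 n (u : 'I_n.+1 -> M) :
  (fun i => star_rev u (lift ord0 i)) = star_rev (fun i => u (widen_ord (leqnSn n) i)).
Proof. by apply: functional_extensionality => i; rewrite /star_rev rev_ord_lift0. Qed.

Lemma star_rev_widen n (u : 'I_n.+1 -> M) :
  (fun i => star_rev u (widen_ord (leqnSn n) i)) = star_rev (fun i => u (lift ord0 i)).
Proof. by apply: functional_extensionality => i; rewrite /star_rev rev_ord_widen. Qed.

Lemma merge_star_rev n (k : 'I_n) (u : 'I_n.+1 -> M) :
  merge (rev_ord k) (star_rev u) = star_rev (merge k u).
Proof.
apply: functional_extensionality => i; rewrite /Defs.merge /star_rev.
rewrite !rev_ord_widen !rev_ord_lift0 (can2_eq rev_ordK rev_ordK).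
have [->|ne_ik] := eqVneq i (rev_ord k); first by rewrite rev_ordK !ltnn stM_circ.
have -> : (rev_ord i < k)%N = ~~ (i < rev_ord k)%N.
  by move: ne_ik; rewrite -val_eqE /=; have := ltn_ord k; have := ltn_ord i; lia.
by case: ifP.
Qed.

Lemma dT_lin n : cochain_linear (@Defs.dT K A M mul lact ract T n).
Proof.
move=> a f g; apply: functional_extensionality => u.
rewrite /Defs.dT (lT_lin _ a) (rT_lin _ a).
under eq_bigr => k _ do rewrite scalerDr scalerA mulrC -scalerA.
rewrite big_split /= -scaler_sumr [a *: (_ *: _)]scalerA mulrC -scalerA -scalerDr.
by rewrite scale_add3_split.
Qed.

Lemma Sop_lin n : cochain_linear (@Defs.Sop K A M st stM n).
Proof.
move=> a f g; apply: functional_extensionality => u.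
by rewrite !SopE st_lin scalerDr !scalerA mulrC.
Qed.

Lemma SopK n : involutive (@Defs.Sop K A M st stM n).
Proof.
move=> f; apply: functional_extensionality => u.
rewrite !SopE (linear_mapZ st_lin) stK scalerA sgnS_sqr scale1r.
by congr f; apply: functional_extensionality => i; rewrite /star_rev rev_ordK stMK.
Qed.

Lemma Sop_multilinear n (f : cochain A M n) : multilinear f -> multilinear (Sop f).
Proof.
move=> f_ml u i a x y; rewrite !SopE.
have star_rev_upd z : star_rev (upd u i z) = upd (star_rev u) (rev_ord i) (stM z).
  apply: functional_extensionality => j; rewrite /star_rev /upd.
  by rewrite (can2_eq rev_ordK rev_ordK); case: ifP.
rewrite !star_rev_upd stM_lin f_ml st_lin scalerDr !scalerA.
by rewrite [_ * a]mulrC -scalerA.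
Qed.

Lemma dT_Sop n (f : cochain A M n) : dT (Sop f) = Sop (dT f).
Proof.
apply: functional_extensionality => u.
rewrite [RHS]SopE /Defs.dT sgnS_recr.
rewrite (linear_mapZ st_lin) (linear_mapD st_lin (_ + _)) (linear_mapD st_lin (lT _ _)).
rewrite (linear_map_sum st_lin) (linear_mapZ st_lin _ (rT _ _)) st_lT st_rT.
rewrite star_rev_lift0 star_rev_widen !st_star_rev.
have -> : star_rev u ord0 = stM (u ord_max) by rewrite /star_rev rev_ord0.
have -> : star_rev u ord_max = stM (u ord0) by rewrite /star_rev rev_ord_max.
rewrite !stMK.
under [in RHS]eq_bigr => k _ do rewrite (linear_mapZ st_lin).
rewrite [in RHS](reindex_inj rev_ord_inj).
under [in RHS]eq_bigr => k _ do rewrite merge_star_rev st_star_rev scaler_comm.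
rewrite [in RHS](linear_mapZ (lT_lin _)) [in RHS](linear_mapZ (rT_lin _)).
rewrite -scaler_sumr [_ *: (sgnS K n *: lT _ _)]scaler_comm -!scalerDr.
rewrite (sign_flip_sum _ _ _ (sign_sqr K n.+1) (@sign_rev_ord K n)).
by rewrite !scalerA mulrACA sgnS_sqr mulr1 mulrC.
Qed.
End StarDifferential.

Section CohomologySplitting.
Variables (K : fieldType) (A M : lmodType K).
Variables (mul : A -> A -> A) (st : A -> A) (lact : A -> M -> M)
  (ract : M -> A -> M) (stM : M -> M) (T : M -> A).

Local Notation dT := (Defs.dT mul lact ract T).
Local Notation Sop := (Defs.Sop st stM).
Local Notation cocycle := (Defs.cocycle mul lact ract T).
Local Notation coboundary := (Defs.coboundary mul lact ract T).
Local Notation HomP := (@Defs.HomP K A M).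
Local Notation iHomP := (@Defs.iHomP K A M st stM).
Local Notation imHomP := (@Defs.imHomP K A M st stM).

Hypotheses (S_lin : forall n, cochain_linear (@Defs.Sop K A M st stM n))
  (S_invol : forall n, involutive (@Defs.Sop K A M st stM n))
  (S_multilinear : forall n (f : cochain A M n), multilinear f -> multilinear (Sop f)).
Hypotheses (d_lin : forall n, cochain_linear (@Defs.dT K A M mul lact ract T n))
  (d_S : forall n (f : cochain A M n), dT (Sop f) = Sop (dT f)).
Hypothesis two_neq0 : (2%:R : K) != 0.

Definition sym_part n (f : cochain A M n) : cochain A M n :=
  fun u => 2%:R^-1 *: (f u + Sop f u).
Definition antisym_part n (f : cochain A M n) : cochain A M n :=
  fun u => 2%:R^-1 *: (f u - Sop f u).

Lemma sym_part_lin n : cochain_linear (@sym_part n).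
Proof.
move=> a f g; apply: functional_extensionality => u; rewrite /sym_part S_lin.
by rewrite addrACA -scalerDr scaler_comm -scalerDr.
Qed.

Lemma antisym_part_lin n : cochain_linear (@antisym_part n).
Proof.
move=> a f g; apply: functional_extensionality => u; rewrite /antisym_part S_lin.
by rewrite opprD addrACA -scalerBr scaler_comm -scalerDr.
Qed.

Lemma Sop_sym_part n (f : cochain A M n) : Sop (sym_part f) = sym_part f.
Proof.
rewrite /sym_part (cochain_linearZ (@S_lin n)) (cochain_linearD (@S_lin n)) S_invol.
by apply: functional_extensionality => u; rewrite addrC.
Qed.

Lemma Sop_antisym_part n (f : cochain A M n) :
  Sop (antisym_part f) = (fun u => - antisym_part f u).
Proof.
rewrite /antisym_part (cochain_linearZ (@S_lin n)) (cochain_linearB (@S_lin n)) S_invol.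
by apply: functional_extensionality => u; rewrite -scalerN opprB.
Qed.

Lemma dT_sym_part n (f : cochain A M n) : dT (sym_part f) = sym_part (dT f).
Proof.
by rewrite /sym_part (cochain_linearZ (@d_lin n)) (cochain_linearD (@d_lin n)) d_S.
Qed.

Lemma dT_antisym_part n (f : cochain A M n) : dT (antisym_part f) = antisym_part (dT f).
Proof.
by rewrite /antisym_part (cochain_linearZ (@d_lin n)) (cochain_linearB (@d_lin n)) d_S.
Qed.

Lemma sym_antisym_partE n (f : cochain A M n) :
  (fun u => sym_part f u + antisym_part f u) = f.
Proof.
apply: functional_extensionality => u; rewrite /sym_part /antisym_part.
by rewrite -scalerDr addrACA subrr addr0 half_add_self.
Qed.

Lemma sym_part_id n (f : cochain A M n) : Sop f = f -> sym_part f = f.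
Proof.
by move=> Sf; apply: functional_extensionality => u; rewrite /sym_part Sf half_add_self.
Qed.

Lemma antisym_part_id n (f : cochain A M n) :
  Sop f = (fun u => - f u) -> antisym_part f = f.
Proof.
move=> Sf; apply: functional_extensionality => u.
by rewrite /antisym_part Sf opprK half_add_self.
Qed.

Lemma sym_part_antisym n (f : cochain A M n) :
  Sop f = (fun u => - f u) -> sym_part f = (fun _ => 0).
Proof.
by move=> Sf; apply: functional_extensionality => u; rewrite /sym_part Sf subrr scaler0.
Qed.

Lemma antisym_part_sym n (f : cochain A M n) : Sop f = f -> antisym_part f = (fun _ => 0).
Proof.
by move=> Sf; apply: functional_extensionality => u; rewrite /antisym_part Sf subrr scaler0.
Qed.

Lemma iHomP0 n : iHomP (fun _ : 'I_n -> M => 0).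
Proof. by split; [exact: multilinear0 | exact: (cochain_linear0 (@S_lin n))]. Qed.

Lemma imHomP0 n : imHomP (fun _ : 'I_n -> M => 0).
Proof.
split; first exact: multilinear0.
rewrite (cochain_linear0 (@S_lin n)).
by apply: functional_extensionality => u; rewrite oppr0.
Qed.

Lemma iHomP_sym_part n (f : cochain A M n) : multilinear f -> iHomP (sym_part f).
Proof.
move=> f_ml; split; last exact: Sop_sym_part.
by apply/multilinearZ/multilinearD => //; apply: S_multilinear.
Qed.

Lemma imHomP_antisym_part n (f : cochain A M n) : multilinear f -> imHomP (antisym_part f).
Proof.
move=> f_ml; split; last exact: Sop_antisym_part.
by apply/multilinearZ/multilinearB => //; apply: S_multilinear.
Qed.

Lemma cocycle_sym_part n (f : cochain A M n) :
  cocycle HomP f -> cocycle iHomP (sym_part f).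
Proof.
move=> [f_ml df0]; split; first exact: iHomP_sym_part.
by rewrite dT_sym_part df0 (cochain_linear0 (@sym_part_lin _)).
Qed.

Lemma cocycle_antisym_part n (f : cochain A M n) :
  cocycle HomP f -> cocycle imHomP (antisym_part f).
Proof.
move=> [f_ml df0]; split; first exact: imHomP_antisym_part.
by rewrite dT_antisym_part df0 (cochain_linear0 (@antisym_part_lin _)).
Qed.

Lemma coboundary0 (X : forall m, cochain A M m -> Prop) n :
  (forall m, X m (fun _ => 0)) -> coboundary X (fun _ : 'I_n -> M => 0).
Proof.
case: n => [|n] X0 //=; exists (fun _ => 0); split; first exact: X0.
exact: (cochain_linear0 (@d_lin n)).
Qed.

Lemma coboundary_split n (f : cochain A M n) :
  coboundary HomP f <->
  coboundary iHomP (sym_part f) /\ coboundary imHomP (antisym_part f).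
Proof.
case: n f => [|n] f /=.
  split=> [-> | [sym0 antisym0]].
    by rewrite (cochain_linear0 (@sym_part_lin 0)) (cochain_linear0 (@antisym_part_lin 0)).
  rewrite -(sym_antisym_partE f) sym0 antisym0.
  by apply: functional_extensionality => u; rewrite addr0.
split=> [[g [g_ml dg]] | [[g1 [[g1_ml _] dg1]] [g2 [[g2_ml _] dg2]]]].
  split; [exists (sym_part g) | exists (antisym_part g)].
    by rewrite dT_sym_part dg; split; first exact: iHomP_sym_part.
  by rewrite dT_antisym_part dg; split; first exact: imHomP_antisym_part.
exists (fun u => g1 u + g2 u); split; first exact: multilinearD.
by rewrite (cochain_linearD (@d_lin n)) dg1 dg2 sym_antisym_partE.
Qed.

Lemma cohomology_splits n : cohomology_iso_sum mul lact ract T HomP iHomP imHomP n.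
Proof.
exists (fun f => (sym_part f, antisym_part f)); split; [|split; [|split]].
- by move=> a f g _ _; rewrite sym_part_lin antisym_part_lin.
- by move=> f Zf; split; [exact: cocycle_sym_part | exact: cocycle_antisym_part].
- by move=> f _; exact: coboundary_split.
- move=> g h [[g_ml Sg] dg0] [[h_ml Sh] dh0].
  exists (fun u => g u + h u); split; [split|].
  + exact: multilinearD.
  + rewrite (cochain_linearD (@d_lin n)) dg0 dh0.
    by apply: functional_extensionality => u; rewrite addr0.
  + rewrite /= (cochain_linearD (@sym_part_lin n)) (cochain_linearD (@antisym_part_lin n)).
    rewrite sym_part_id // sym_part_antisym // antisym_part_sym // antisym_part_id //.
    split; rewrite (_ : (fun u => _) = (fun _ => 0)).
    * exact: coboundary0 iHomP0.
    * by apply: functional_extensionality => u; rewrite addr0 subrr.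
    * exact: coboundary0 imHomP0.
    * by apply: functional_extensionality => u; rewrite add0r subrr.
Qed.
End CohomologySplitting.

Theorem mainTheorem5 (K : fieldType) (A M : lmodType K)
    (mul : A -> A -> A) (st : A -> A)
    (lact : A -> M -> M) (ract : M -> A -> M) (stM : M -> M) (T : M -> A) :
  (2%:R : K) != 0 ->
  involutive_assoc_algebra mul st ->
  involutive_bimodule mul st lact ract stM ->
  rel_RB_operator mul st lact ract stM T ->
  forall n : nat,
    cohomology_iso_sum mul lact ract T
      (@HomP K A M) (@iHomP K A M st stM) (@imHomP K A M st stM) n.
Proof.
move=> two_neq0 [mul_bilin [_ [st_lin [stK st_mul]]]].
move=> [lact_bilin [ract_bilin [_ [_ [_ [stM_lin [stMK [stM_lact stM_ract]]]]]]]].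
move=> [T_lin [T_stM _]] n.
apply: (cohomology_splits _ _ _ _ _ two_neq0).
- by move=> m; apply: Sop_lin.
- by move=> m; apply: SopK.
- by move=> m f; apply: Sop_multilinear.
- by move=> m; apply: dT_lin.
- by move=> m f; apply: dT_Sop.
Qed.
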